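(* For $B',B\in\mathcal X_{N-2}$ such that $B'\preceq B$ we have $\varphi(B')\le\varphi(B)$.
   Context: Let $N\ge 3$ be an odd integer and $F=\mathbb Z/2\mathbb Z$. For integers $i,j$ let $[i,j]=\{h\in\mathbb Z: i\le h\le j\}$ (empty if $i>j$). Let $S_N=[1,N]$. The set of all subsets of $S_N$ is an $F$-vector space with sum $X+X'=(X\cup X')-(X\cap X')$; let $E_N$ be the subspace of subsets of even cardinality. A $2$-element subset $\{i,j\}\subseteq S_N$ is written $ij$ when either ($i<j$ and $j-i$ odd) or ($i>j$ and $i-j$ even); each $2$-element subset has exactly one such writing. Let $\mathcal P_N$ be the set of all finite sets $B$ of pairwise disjoint $2$-element subsets of $S_N$; for $B\in\mathcal P_N$ let $\langle B\rangle$ be the $F$-subspace of $E_N$ spanned by the elements of $B$, $\mathrm{supp}(B)=\bigcup_{X\in B}X$, $B^0=\{\{i,j\}\in B: i-j\text{ even}\}$, $B^1=\{\{i,j\}\in B: i-j\text{ odd}\}$. A set $X\subseteq S_N$ is $0$-covered (resp. $1$-covered) by $B^1$ if there are $a_1b_1,\dots,a_sb_s\in B^1$ ($s\ge 0$, so $a_r<b_r$) with $X=[a_1,b_1]\sqcup\dots\sqcup[a_s,b_s]$ (resp. $X=[a_1,b_1]\sqcup\dots\sqcup[a_s,b_s]\sqcup\{u\}$ for some $u$), disjoint unions. Let ${}^*\mathcal P_N$ be the set of $B\in\mathcal P_N$ such that: for every $ij\in B^1$ the set $[i+1,j-1]$ is $0$-covered by $B^1$; and there is a sequence $i_*(B)=(i_1,\dots,i_{2s})$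 in $S_N$ with $B^0=\{i_{2s}i_1,i_{2s-1}i_2,\dots,i_{s+1}i_s\}$ (so $s=|B^0|$; the sequence is unique) such that, if $s\ge1$, each of $[i_1+1,i_2-1],\dots,[i_{s-1}+1,i_s-1],[i_{s+1}+1,i_{s+2}-1],\dots,[i_{2s-1}+1,i_{2s}-1]$ is $0$-covered by $B^1$. For $B\in{}^*\mathcal P_N$ with $i_*(B)=(i_1,\dots,i_{2s})$ consider: (I) $s=0$, or $s\ge1$ and $[1,i_1-1]$ and $[i_{2s}+1,N]$ are $0$-covered by $B^1$; (II) $N\notin\mathrm{supp}(B)$ and either $s=0$, or $s$ is odd and either (i) $[1,i_1-1]$ is $1$-covered and $[i_{2s}+1,N-1]$ is $0$-covered by $B^1$, or (ii) $[1,i_1-1]$ is $0$-covered and $[i_{2s}+1,N-1]$ is $1$-covered by $B^1$; (III) (I) holds and, if $s$ is even then $\{i,N\}\in B$ for some even $i$, if $s$ is odd then $\{i,N\}\in B$ for some odd $i$. Let $\mathcal X_{N-1}$, $\mathcal X^+_{N-2}$, $\mathcal X^-_{N-2}$ be the sets of $B\in{}^*\mathcal P_N$ satisfying (I), (II), (III) respectively, and $\mathcal X_{N-2}=\mathcal X^+_{N-2}\sqcup\mathcal X^-_{N-2}$. For $B\in\mathcal X^+_{N-2}$ with $s\ge1$ there is a unique $u_B$: in case (i), $u_B\in[1,i_1-1]$ with $[1,u_B-1]$, $[u_B+1,i_1-1]$ $0$-covered by $B^1$ ($u_B$ odd); in case (ii), $u_B\in[i_{2s}+1,N-1]$ with $[i_{2s}+1,u_B-1]$,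 $[u_B+1,N-1]$ $0$-covered by $B^1$ ($u_B$ even). Put $[[ij]]=[i,j]$ if $i<j$ and $[[ij]]=[i,N]\cup[1,j]$ if $i>j$. For $B\in\mathcal X_{N-1}$ let $\epsilon(B)=\sum_{ij\in B}[[ij]]\in E_N$. For $B\in\mathcal X_{N-2}$ define ${}'\epsilon(B)\in E_N$: ${}'\epsilon(B)=\sum_{ij\in B}[[ij]]$ if $B\in\mathcal X^-_{N-2}$ or if $B\in\mathcal X^+_{N-2}$ with $|B^0|=0$; ${}'\epsilon(B)=\sum_{ij\in B}[[ij]]+[u_B,N]$ if $B\in\mathcal X^+_{N-2}$, $|B^0|$ odd, $u_B$ even; ${}'\epsilon(B)=\sum_{ij\in B}[[ij]]+\{N\}+[1,u_B]$ if $B\in\mathcal X^+_{N-2}$, $|B^0|$ odd, $u_B$ odd. The map $\varphi:\mathcal X_{N-2}\to\mathcal X_{N-1}$ (a bijection) is given by $\varphi(B)=B$ if $B\in\mathcal X^-_{N-2}$ or if $B\in\mathcal X^+_{N-2}$ with $|B^0|=0$, and $\varphi(B)=B\sqcup\{\{u_B,N\}\}$ if $B\in\mathcal X^+_{N-2}$ with $|B^0|>0$. For $B,B'\in\mathcal X_{N-2}$ write $B'\preceq B$ if there is a sequence $B'=B_0,\dots,B_h=B$ ($h\ge0$) in $\mathcal X_{N-2}$ with ${}'\epsilon(B_k)\in\langle B_{k+1}\rangle$ for $k=0,\dots,h-1$. For $B,B'\in\mathcal X_{N-1}$ write $B'\le B$ if there is a sequence $B'=B_0,\dots,B_h=B$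 ($h\ge0$) in $\mathcal X_{N-1}$ with $\epsilon(B_k)\in\langle B_{k+1}\rangle$ for $k=0,\dots,h-1$. *)

From mathcomp Require Import all_boot.
Set Implicit Arguments. Unset Strict Implicit. Unset Printing Implicit Defensive.

(* Points of S_N = [1,N] are represented in 'I_N.+1 = {0,...,N}; the point 0
   is never used (every relevant subset is contained in S_N = itv N 1 N). *)

Section Defs.
Variable N : nat.
Local Notation pt := 'I_N.+1.
Local Notation subs := {set pt}.
Local Notation fam := {set {set pt}}.

Definition itv (i j : nat) : subs := [set x : pt | (i <= x <= j)%N].

Definition SN : subs := itv 1 N.

(* the F_2-vector-space sum X + X' = (X u X') - (X n X') *)
Definition symd (X Y : subs) : subs := (X :\: Y) :|: (Y :\: X).

Definition sumF (D : fam) : subs := \big[symd/set0]_(Y in D) Y.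

(* X in <B> : X is an F_2-linear combination (= sum of a subfamily) of elements of B *)
Definition inspan (X : subs) (B : fam) : bool :=
  [exists D : fam, (D \subset B) && (X == sumF D)].

Definition is2 (X : subs) : bool := (#|X| == 2) && (X \subset SN).

Definition inP (B : fam) : bool :=
  [forall X in B, is2 X] &&
  [forall X in B, forall Y in B, (X != Y) ==> [disjoint X & Y]].

Definition supp (B : fam) : subs := \bigcup_(X in B) X.

Definition odd_pair (X : subs) : bool :=
  [exists x in X, exists y in X, odd (x + y)].

Definition B1 (B : fam) : fam := [set X in B | odd_pair X].
Definition B0 (B : fam) : fam := [set X in B | ~~ odd_pair X].

Definition hull (X : subs) : subs :=
  [set z : pt | [exists x in X, exists y in X, (x <= z <= y)%N]].

Definition hulls_disjoint (C : fam) : bool :=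
  [forall Y in C, forall Z in C, (Y != Z) ==> [disjoint hull Y & hull Z]].

Definition covered0 (B : fam) (X : subs) : bool :=
  [exists C : fam, [&& C \subset B1 B, hulls_disjoint C &
                       X == \bigcup_(Y in C) hull Y]].

Definition covered1 (B : fam) (X : subs) : bool :=
  [exists u : pt, exists C : fam,
     [&& C \subset B1 B, hulls_disjoint C,
         u \notin \bigcup_(Y in C) hull Y &
         X == u |: \bigcup_(Y in C) hull Y]].

(* i_*(B) = (i_1 < ... < i_{2s}) : the increasing enumeration of supp(B^0);
   i_{k+1} = ist B k (0-indexed). *)
Definition istar (B : fam) : seq nat :=
  sort leq (map (@nat_of_ord _) (enum (supp (B0 B)))).
Definition sB (B : fam) : nat := #|B0 B|.
Definition ist (B : fam) (k : nat) : nat := nth 0 (istar B) k.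
Definition ifirst (B : fam) : nat := ist B 0.
Definition ilast (B : fam) : nat := ist B (2 * sB B).-1.

Definition starP (B : fam) : bool :=
  [&& inP B,
      [forall X in B1 B, covered0 B (hull X :\: X)],
      (* B^0 = { i_{2s} i_1, i_{2s-1} i_2, ..., i_{s+1} i_s } *)
      (size (istar B) == 2 * sB B),
      B0 B == [set X : subs | [exists k : 'I_(sB B),
                 X == [set x : pt | (val x == ist B k) ||
                                    (val x == ist B (2 * sB B - 1 - k))]]] &
      (* [i_k+1, i_{k+1}-1] 0-covered for k = 1..s-1 and k = s+1..2s-1 *)
      [forall k : 'I_(2 * sB B),
         ((k.+1 < 2 * sB B) && (k.+1 != sB B)) ==>
         covered0 B (itv (ist B k).+1 (ist B k.+1).-1)]].

Definition condI (B : fam) : bool :=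
  (sB B == 0) ||
  (covered0 B (itv 1 (ifirst B).-1) && covered0 B (itv (ilast B).+1 N)).

Definition caseI (B : fam) : bool :=
  covered1 B (itv 1 (ifirst B).-1) && covered0 B (itv (ilast B).+1 N.-1).
Definition caseII (B : fam) : bool :=
  covered0 B (itv 1 (ifirst B).-1) && covered1 B (itv (ilast B).+1 N.-1).

Definition Nin (X : subs) : bool := [exists x in X, val x == N].

Definition condII (B : fam) : bool :=
  ~~ Nin (supp B) &&
  ((sB B == 0) || (odd (sB B) && (caseI B || caseII B))).

Definition condIII (B : fam) : bool :=
  condI B &&
  [exists X in B, Nin X && [exists y in X, (val y != N) && (odd y == odd (sB B))]].

Definition XN1 (B : fam) : bool := starP B && condI B.
Definition XN2p (B : fam) : bool := starP B && condII B.
Definition XN2m (B : fam) : bool := starP B && condIII B.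
Definition XN2 (B : fam) : bool := XN2p B || XN2m B.

Definition u_cond (B : fam) (u : pt) : bool :=
  if caseI B then
    [&& 1 <= u <= (ifirst B).-1, covered0 B (itv 1 u.-1) &
        covered0 B (itv u.+1 (ifirst B).-1)]
  else
    [&& (ilast B).+1 <= u <= N.-1, covered0 B (itv (ilast B).+1 u.-1) &
        covered0 B (itv u.+1 N.-1)].

Definition uB (B : fam) : nat :=
  if [pick u | u_cond B u] is Some u then val u else 0.

(* [[ij]] : [i,j] if i < j (odd pair), [i,N] u [1,j] if i > j (even pair) *)
Definition brk (X : subs) : subs :=
  if odd_pair X then hull X else SN :\: (hull X :\: X).

Definition eps (B : fam) : subs := \big[symd/set0]_(X in B) brk X.

Definition eps' (B : fam) : subs :=
  if XN2m B || (sB B == 0) then eps B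
  else if odd (uB B) then symd (eps B) (symd [set x : pt | val x == N] (itv 1 (uB B)))
  else symd (eps B) (itv (uB B) N).

Definition pairset (i j : nat) : subs := [set x : pt | (val x == i) || (val x == j)].

Definition phi (B : fam) : fam :=
  if XN2p B && (0 < sB B) then B :|: [set pairset (uB B) N] else B.

Definition preceq (B' B : fam) : Prop :=
  exists p : seq fam,
    [&& all XN2 (B' :: p), path (fun X Y => inspan (eps' X) Y) B' p & last B' p == B].

Definition leX (B' B : fam) : Prop :=
  exists p : seq fam,
    [&& all XN1 (B' :: p), path (fun X Y => inspan (eps X) Y) B' p & last B' p == B].

End Defs.

From HB Require Import structures.
From mathcomp Require Import all_boot zify.
Set Implicit Arguments. Unset Strict Implicit. Unset Printing Implicit Defensive.

(* The point u_B lies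
   outside supp B: no odd pair straddles a point of supp B^0, so an odd pair through
   u_B would have its hull inside one of the 0-covered intervals flanking u_B.  As
   0-covered sets have even cardinality, u_B is odd in case (i) and even in case (ii).
   If u_B is even, {u_B, N} is an odd pair whose interior [u_B+1, N-1] is 0-covered;
   if u_B is odd, it is a new outermost even pair, turning i_* into
   (u_B, i_1, ..., i_2s, N).  Either way phi B lies in X_{N-1}, and [[u_B N]] is
   exactly the correction term of [eps'], so eps (phi B) = eps' B.  Since B is
   contained in phi B, phi maps a chain witnessing [preceq B' B] to a chain
   witnessing [leX (phi B') (phi B)]. *)

Section SymmetricDifference.
Variable N : nat.
Implicit Types (X Y P : {set 'I_N.+1}) (B : {set {set 'I_N.+1}}).

Lemma in_symd X Y x : (x \in symd X Y) = (x \in X) (+) (x \in Y).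
Proof. by rewrite !inE; case: (x \in X); case: (x \in Y). Qed.

Lemma symdA : associative (@symd N).
Proof. by move=> X Y Z; apply/setP=> x; rewrite !in_symd addbA. Qed.

Lemma symdC : commutative (@symd N).
Proof. by move=> X Y; apply/setP=> x; rewrite !in_symd addbC. Qed.

Lemma sym0d : left_id set0 (@symd N).
Proof. by move=> X; apply/setP=> x; rewrite in_symd inE. Qed.

HB.instance Definition _ := Monoid.isComLaw.Build {set 'I_N.+1} set0 (@symd N) symdA symdC sym0d.

Lemma eps_setU1 B P : P \notin B -> eps (B :|: [set P]) = symd (eps B) (brk P).
Proof. by move=> PnB; rewrite /eps setUC big_setU1 //= symdC. Qed.

End SymmetricDifference.

Section IntervalsAndHulls.
Variable N : nat.
Implicit Types X : {set 'I_N.+1}.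

Lemma itv0 a b : b < a -> itv N a b = set0.
Proof. by move=> ba; apply/setP=> x; rewrite !inE; lia. Qed.

Lemma card_itv a b : b <= N -> #|itv N a b| = b.+1 - a.
Proof.
move=> bN; rewrite -sum1_card.
rewrite (eq_bigl (fun i : 'I_N.+1 => a <= i <= b)) => [|i]; last by rewrite inE.
rewrite -(big_mkord (fun i => a <= i <= b) (fun _ => 1)).
suff count_upto n : n <= N.+1 -> \sum_(0 <= i < n | a <= i <= b) 1 = minn n b.+1 - a.
  by rewrite count_upto //; lia.
elim: n => [|n IHn] nN; first by rewrite big_geq //; lia.
rewrite big_mkcond big_nat_recr //= -big_mkcond IHn; last lia.
by case: ifP => /=; lia.
Qed.

Lemma itv_splitU a b u : 1 <= u -> a <= u <= b.+1 ->
  itv N a b = itv N a u.-1 :|: itv N u b.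
Proof. by move=> u1 aub; apply/setP=> x; rewrite !inE; apply/idP/idP; lia. Qed.

Lemma disjoint_itv a b u : 1 <= u -> [disjoint itv N a u.-1 & itv N u b].
Proof. by move=> u1; rewrite -setI_eq0; apply/eqP/setP=> x; rewrite !inE; lia. Qed.

Lemma sub_hull X : X \subset hull X.
Proof.
apply/subsetP=> x xX; rewrite inE.
by apply/existsP; exists x; rewrite xX; apply/existsP; exists x; rewrite xX leqnn.
Qed.

Lemma hull_convex X (y z u : 'I_N.+1) :
  y \in hull X -> z \in hull X -> y <= u <= z -> u \in hull X.
Proof.
rewrite !inE => /existsP[y1 /andP[y1X /existsP[y2 /andP[_ y1y]]]].
move=> /existsP[z1 /andP[_ /existsP[z2 /andP[z2X zz2]]]] yuz.
apply/existsP; exists y1; rewrite y1X; apply/existsP; exists z2; rewrite z2X.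
by move: y1y zz2 yuz; clear; lia.
Qed.

Lemma hull_side X (y z u : 'I_N.+1) :
  y \in hull X -> z \in hull X -> u \notin hull X -> (y < u) = (z < u).
Proof.
move=> yX zX uX; apply/idP/idP=> lt; apply: contraNT uX; rewrite -leqNgt => ge.
  by apply: hull_convex yX zX _; lia.
by apply: hull_convex zX yX _; lia.
Qed.

Lemma hull2 (a b : 'I_N.+1) : hull [set a; b] = itv N (minn a b) (maxn a b).
Proof.
apply/setP=> x; rewrite !inE; apply/idP/idP.
  case/existsP=> y /andP[+ /existsP[z /andP[+ +]]].
  by rewrite !inE => /orP[]/eqP-> /orP[]/eqP->; lia.
case: (leqP a b) => ab axb.
  by apply/existsP; exists a; rewrite set21; apply/existsP; exists b; rewrite set22; lia.
by apply/existsP; exists b; rewrite set22; apply/existsP; exists a; rewrite set21; lia.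
Qed.

End IntervalsAndHulls.

Section Pairs.
Variable N : nat.
Implicit Types (X : {set 'I_N.+1}) (u : 'I_N.+1).

Lemma odd_pair2 (a b : 'I_N.+1) : odd_pair [set a; b] = odd (a + b).
Proof.
apply/idP/idP; last first.
  by move=> oab; apply/existsP; exists a; rewrite set21; apply/existsP; exists b; rewrite set22.
case/existsP=> y /andP[+ /existsP[z /andP[+ +]]].
by rewrite !inE => /orP[]/eqP-> /orP[]/eqP->; rewrite ?addnn ?odd_double // addnC.
Qed.

Lemma hull_odd_pair_even X : is2 X -> odd_pair X -> ~~ odd #|hull X|.
Proof.
case/andP=> /cards2P[a [b [_ ->]]] _; rewrite odd_pair2 hull2 card_itv; last first.
  by have := ltn_ord a; have := ltn_ord b; lia.
lia.
Qed.

Lemma pairsetE u : pairset N u N = [set u; ord_max].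
Proof. by apply/setP=> x; rewrite !inE -val_eqE. Qed.

Lemma is2_pairset u : 1 <= u < N -> is2 (pairset N u N).
Proof.
move=> uN; rewrite /is2 pairsetE cards2 -val_eqE /=.
apply/andP; split; first by apply/eqP; lia.
by apply/subsetP=> x; rewrite !inE => /orP[]/eqP->; rewrite /=; lia.
Qed.

Lemma hull_pairset u : hull (pairset N u N) = itv N u N.
Proof.
have uN : u <= N := leq_ord u.
by rewrite pairsetE hull2 /= (minn_idPl uN) (maxn_idPr uN).
Qed.

Lemma odd_pair_pairset u : odd_pair (pairset N u N) = odd (u + N).
Proof. by rewrite pairsetE odd_pair2. Qed.

End Pairs.

Section Families.
Variable N : nat.
Implicit Types (X Y P R : {set 'I_N.+1}) (B : {set {set 'I_N.+1}}).

Lemma mem_supp B X x : X \in B -> x \in X -> x \in supp B.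
Proof. by move=> XB xX; apply/bigcupP; exists X. Qed.

Lemma supp_setU1 B P : supp (P |: B) = P :|: supp B.
Proof. by rewrite /supp bigcup_setU big_set1. Qed.

Lemma inP_is2 B X : inP B -> X \in B -> is2 X.
Proof. by case/andP=> /forallP/(_ X)/implyP. Qed.

Lemma inP_eq B X Y x : inP B -> X \in B -> Y \in B -> x \in X -> x \in Y -> X = Y.
Proof.
case/andP=> _ /forallP/(_ X)/implyP disjB XB YB xX xY; apply/eqP/contraT => XY.
move: disjB => /(_ XB)/forallP/(_ Y)/implyP/(_ YB)/implyP/(_ XY)/disjoint_setI0/setP/(_ x).
by rewrite !inE xX xY.
Qed.

Lemma inP_setU1 B P : inP B -> is2 P -> [disjoint P & supp B] -> inP (B :|: [set P]).
Proof.
move=> iB P2 PB; apply/andP; split.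
  by apply/forallP=> X; apply/implyP; rewrite !inE; case/orP=> [/(inP_is2 iB)|/eqP->].
apply/forallP=> X; apply/implyP=> XB'; apply/forallP=> Y; apply/implyP=> YB'.
apply/implyP=> XY; rewrite -setI_eq0; apply/eqP/setP=> x; rewrite !inE.
apply/negbTE/andP=> -[xX xY]; move: XB' YB' XY; rewrite !inE.
have PnB x' Z : Z \in B -> x' \in Z -> x' \in P -> False.
  by move=> ZB xZ xP; move/disjoint_setI0/setP/(_ x'): PB; rewrite !inE xP (mem_supp ZB xZ).
case/orP=> [XB|/eqP eX]; case/orP=> [YB|/eqP eY].
- by rewrite (inP_eq iB XB YB xX xY) eqxx.
- by case: (PnB x X XB xX); rewrite -eY.
- by case: (PnB x Y YB xY); rewrite -eX.
- by rewrite eX eY eqxx.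
Qed.

Lemma B0_sub B R : R \in B0 B -> R \in B.
Proof. by rewrite inE => /andP[]. Qed.

Lemma supp_B0_supp B x : x \in supp (B0 B) -> x \in supp B.
Proof. by case/bigcupP=> X /B0_sub XB xX; apply: mem_supp XB xX. Qed.

Lemma B1_sub B R : R \in B1 B -> R \in B.
Proof. by rewrite inE => /andP[]. Qed.

Lemma B1S B B' : B \subset B' -> B1 B \subset B1 B'.
Proof. by move/subsetP=> sB; apply/subsetP=> X; rewrite !inE => /andP[/sB -> ->]. Qed.

Lemma B0_setU1_even B P : ~~ odd_pair P -> B0 (B :|: [set P]) = P |: B0 B.
Proof.
move=> oP; apply/setP=> X; rewrite !inE.
by case: (eqVneq X P) => [->|_] /=; rewrite ?oP ?orbT ?orbF.
Qed.

Lemma B1_setU1_even B P : ~~ odd_pair P -> B1 (B :|: [set P]) = B1 B.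
Proof.
move=> /negPf oP; apply/setP=> X; rewrite !inE.
by case: (eqVneq X P) => [->|_] /=; rewrite ?oP ?orbF ?andbF.
Qed.

Lemma B0_setU1_odd B P : odd_pair P -> B0 (B :|: [set P]) = B0 B.
Proof.
move=> oP; apply/setP=> X; rewrite !inE.
by case: (eqVneq X P) => [->|_] /=; rewrite ?oP ?orbF ?andbF.
Qed.

Lemma B1_setU1_odd B P : odd_pair P -> B1 (B :|: [set P]) = P |: B1 B.
Proof.
move=> oP; apply/setP=> X; rewrite !inE.
by case: (eqVneq X P) => [->|_] /=; rewrite ?oP ?orbT ?orbF.
Qed.

End Families.

Section Coverings.
Variable N : nat.
Implicit Types (X Y P S : {set 'I_N.+1}) (B C : {set {set 'I_N.+1}}).

Definition inner_covered B := [forall X in B1 B, covered0 B (hull X :\: X)].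

Lemma hulls_disjointS C C' : C' \subset C -> hulls_disjoint C -> hulls_disjoint C'.
Proof.
move/subsetP=> sC /forallP hdC; apply/forallP=> Y; apply/implyP=> /sC YC.
apply/forallP=> Z; apply/implyP=> /sC ZC.
by move: (hdC Y) => /implyP/(_ YC)/forallP/(_ Z)/implyP/(_ ZC).
Qed.

Lemma hulls_disjoint_eq C Y Z x : hulls_disjoint C -> Y \in C -> Z \in C ->
  x \in hull Y -> x \in hull Z -> Y = Z.
Proof.
move=> /forallP hdC YC ZC xY xZ; apply/eqP/contraT => YZ.
move: (hdC Y) => /implyP/(_ YC)/forallP/(_ Z)/implyP/(_ ZC)/implyP/(_ YZ).
by move/disjoint_setI0/setP/(_ x); rewrite in_setI xY xZ in_set0.
Qed.

Lemma covered0S B B' X : B \subset B' -> covered0 B X -> covered0 B' X.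
Proof.
move/B1S=> sB /existsP[C /and3P[sC hdC eX]]; apply/existsP; exists C.
by rewrite (subset_trans sC sB) hdC eX.
Qed.

Lemma covered0_itv0 B a b : b < a -> covered0 B (itv N a b).
Proof.
move=> ba; apply/existsP; exists set0; rewrite itv0 // sub0set big_set0 eqxx andbT.
by apply/forallP=> Y; rewrite inE.
Qed.

Lemma covered0U B X Y : covered0 B X -> covered0 B Y -> [disjoint X & Y] ->
  covered0 B (X :|: Y).
Proof.
move=> /existsP[C1 /and3P[s1 hd1 /eqP eX]] /existsP[C2 /and3P[s2 hd2 /eqP eY]] dXY.
apply/existsP; exists (C1 :|: C2); apply/and3P; split; first by rewrite subUset s1 s2.
  2: by rewrite bigcup_setU -eX -eY.
have hullX Z : Z \in C1 -> hull Z \subset X by move=> ZC; rewrite eX; apply: bigcup_sup.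
have hullY Z : Z \in C2 -> hull Z \subset Y by move=> ZC; rewrite eY; apply: bigcup_sup.
apply/forallP=> Y1; apply/implyP=> Y1C; apply/forallP=> Y2; apply/implyP=> Y2C.
apply/implyP=> Y12; move: Y1C Y2C; rewrite !inE => /orP[a1|a2] /orP[b1|b2].
- by move/forallP: hd1 => /(_ Y1); rewrite a1 => /forallP/(_ Y2); rewrite b1 Y12.
- exact: disjointWl (hullX _ a1) (disjointWr (hullY _ b2) dXY).
- by rewrite disjoint_sym; apply: disjointWl (hullX _ b1) (disjointWr (hullY _ a2) dXY).
- by move/forallP: hd2 => /(_ Y1); rewrite a2 => /forallP/(_ Y2); rewrite b2 Y12.
Qed.

Lemma covered0_hull B P : P \in B1 B -> covered0 B (hull P).
Proof.
move=> PB; apply/existsP; exists [set P]; rewrite sub1set PB big_set1 eqxx andbT.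
apply/forallP=> Y; apply/implyP; rewrite inE => /eqP->.
by apply/forallP=> Z; apply/implyP; rewrite inE => /eqP->; rewrite eqxx.
Qed.

Lemma covered0_even B X : inP B -> covered0 B X -> ~~ odd #|X|.
Proof.
move=> iB /existsP[C /and3P[sC hdC /eqP->]].
rewrite -cover_imset; have /eqP <- : trivIset ((@hull N) @: C).
  apply/trivIsetP=> _ _ /imsetP[Y YC ->] /imsetP[Z ZC ->] YZ.
  rewrite -setI_eq0; apply/set0Pn=> -[x /setIP[xY xZ]].
  by move: YZ; rewrite (hulls_disjoint_eq hdC YC ZC xY xZ) eqxx.
rewrite -dvdn2; apply: dvdn_sum => _ /imsetP[Y YC ->].
have := subsetP sC Y YC; rewrite inE dvdn2 => /andP[YB oY].
exact: hull_odd_pair_even (inP_is2 iB YB) oY.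
Qed.

Lemma covered0_sub_bigcup B C S :
    C \subset B1 B -> hulls_disjoint C -> S \subset \bigcup_(Y in C) hull Y ->
    (forall Y x, Y \in C -> x \in hull Y -> x \in S -> hull Y \subset S) ->
  covered0 B S.
Proof.
move=> sC hdC /subsetP SC closedS; set C' := [set Y in C | hull Y \subset S].
have sC' : C' \subset C by apply/subsetP=> Y; rewrite inE => /andP[].
apply/existsP; exists C'; rewrite (subset_trans sC' sC) (hulls_disjointS sC' hdC) /=.
rewrite eqEsubset; apply/andP; split; apply/subsetP=> x.
  move=> xS; case/bigcupP: (SC x xS) => Y YC xY; apply/bigcupP; exists Y => //.
  by rewrite inE YC (closedS Y x).
by case/bigcupP=> Y /setIdP[_ /subsetP hYS] /hYS.
Qed.

Lemma covered1_split B a b : 1 <= a -> covered1 B (itv N a b) ->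
  exists u : 'I_N.+1,
    [/\ a <= u <= b, covered0 B (itv N a u.-1) & covered0 B (itv N u.+1 b)].
Proof.
move=> a1 /existsP[u /existsP[C /and4P[sC hdC uC /eqP eX]]].
set U := \bigcup_(Y in C) hull Y in uC eX.
have inU (x : 'I_N.+1) : a <= x <= b -> x != u -> x \in U.
  move=> xab /negPf xu; have : x \in itv N a b by rewrite inE.
  by rewrite eX in_setU1 xu.
have hullY Y : Y \in C -> hull Y \subset itv N a b.
  move=> YC; rewrite eX; apply/subsetP=> x xY.
  by rewrite in_setU1; apply/orP; right; apply/bigcupP; exists Y.
have uY Y : Y \in C -> u \notin hull Y.
  by move=> YC; apply: contra uC => uY; apply/bigcupP; exists Y.
have : u \in itv N a b by rewrite eX setU11.
rewrite inE => uab; exists u; split=> //; apply: (covered0_sub_bigcup sC hdC).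
- by apply/subsetP=> x; rewrite inE => xr; apply: inU; [|rewrite -val_eqE /=]; lia.
- move=> Y x YC xY; rewrite inE => xr; apply/subsetP=> z zY.
  have := subsetP (hullY Y YC) z zY; have := hull_side xY zY (uY Y YC).
  by rewrite !inE; lia.
- by apply/subsetP=> x; rewrite inE => xr; apply: inU; [|rewrite -val_eqE /=]; lia.
- move=> Y x YC xY; rewrite inE => xr; apply/subsetP=> z zY.
  have zu : z != u by apply: contraNneq (uY Y YC) => <-.
  have := subsetP (hullY Y YC) z zY; have := hull_side xY zY (uY Y YC).
  by move: zu; rewrite !inE -val_eqE /=; lia.
Qed.

End Coverings.

Section InnerCovered.
Variable N : nat.
Implicit Types X P R : {set 'I_N.+1}.
Variable B : {set {set 'I_N.+1}}.
Hypotheses (iB : inP B) (innerB : inner_covered B).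

(* A point of [hull Y] outside [Y] lies in the 0-covered interior of [Y], a smaller set. *)
Lemma covered0_mem_B1 X x : covered0 B X -> x \in X ->
  exists2 Q, Q \in B1 B & (x \in Q) && (hull Q \subset X).
Proof.
move: {2}#|X| (leqnn #|X|) => n; elim: n X x => [|n IHn] X x cardX.
  by move: cardX; rewrite leqn0 cards_eq0 => /eqP-> _; rewrite inE.
case/existsP=> C /and3P[sC _ /eqP eX] xX.
have /bigcupP[Y YC xY] : x \in \bigcup_(Y in C) hull Y by rewrite -eX.
have YB1 : Y \in B1 B := subsetP sC Y YC.
have hYX : hull Y \subset X by rewrite eX (bigcup_sup _ YC).
case xY' : (x \in Y); first by exists Y; rewrite ?xY' ?hYX.
have Y2 : #|Y| = 2 by case/andP: (inP_is2 iB (B1_sub YB1)) => /eqP.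
have cardD : #|hull Y :\: Y| <= n.
  rewrite cardsD (setIidPr (sub_hull Y)) Y2.
  by move: (subset_leq_card hYX) cardX; clear; lia.
have [|Q QB1 /andP[xQ sQ]] := IHn _ x cardD (forall_inP innerB Y YB1).
  by rewrite inE xY' xY.
by exists Q; rewrite // xQ (subset_trans sQ) // (subset_trans (subsetDl _ _) hYX).
Qed.

Lemma B1_hull_sub_covered0 X P x : covered0 B X -> P \in B1 B ->
  x \in P -> x \in X -> hull P \subset X.
Proof.
move=> cX PB1 xP /(covered0_mem_B1 cX)[Q QB1 /andP[xQ]].
by rewrite (inP_eq iB (B1_sub PB1) (B1_sub QB1) xP xQ).
Qed.

Lemma B0_notin_hull_B1 R P z : R \in B0 B -> z \in R -> P \in B1 B -> z \notin hull P.
Proof.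
move=> RB0 zR PB1; have B0B1 Q : Q \in B1 B -> z \in Q -> False.
  move=> QB1 zQ; have RQ := inP_eq iB (B0_sub RB0) (B1_sub QB1) zR zQ.
  by move: RB0 QB1; rewrite !inE RQ => /andP[_ /negPf->] /andP[].
apply/negP=> zhP; case zP : (z \in P); first exact: B0B1 P PB1 zP.
have [|Q QB1 /andP[zQ _]] := covered0_mem_B1 (forall_inP innerB P PB1) (x := z).
  by rewrite inE zP zhP.
exact: B0B1 Q QB1 zQ.
Qed.

Lemma B1_not_across_B0 P (y z y' : 'I_N.+1) : z \in supp (B0 B) -> P \in B1 B ->
  y \in P -> y' \in P -> ~~ (y <= z <= y').
Proof.
case/bigcupP=> R RB0 zR PB1 yP y'P; apply: contraNN (B0_notin_hull_B1 RB0 zR PB1).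
by apply: hull_convex; apply: (subsetP (sub_hull P)).
Qed.

Lemma notin_supp_between (u : 'I_N.+1) lo hi : 1 <= lo -> lo <= u <= hi ->
    covered0 B (itv N lo u.-1) -> covered0 B (itv N u.+1 hi) -> u \notin supp (B0 B) ->
    (forall P v, P \in B1 B -> u \in P -> v \in P -> lo <= v <= hi) ->
  u \notin supp B.
Proof.
move=> lo1 ur cLo cHi uB0 partner; apply/negP=> /bigcupP[X XB uX].
case oX : (odd_pair X); last first.
  by apply: (negP uB0); apply/bigcupP; exists X; rewrite // inE XB oX.
have XB1 : X \in B1 B by rewrite inE XB oX.
have [v /setD1P[vu vX]] : exists v, v \in X :\ u.
  apply/set0Pn; rewrite -card_gt0; move: (cardsD1 u X); rewrite uX add1n.
  by case/andP: (inP_is2 iB XB) => /eqP-> _ [<-].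
have vr := partner X v XB1 uX vX.
have uhX : u \in hull X by apply: (subsetP (sub_hull X)).
case: (ltngtP v u) => [vu'|uv|/val_inj vu']; last by rewrite vu' eqxx in vu.
  have vLo : v \in itv N lo u.-1 by rewrite inE; move: vr vu'; clear; lia.
  move: (B1_hull_sub_covered0 cLo XB1 vX vLo) lo1 => /subsetP/(_ u uhX).
  by rewrite inE; clear; lia.
have vHi : v \in itv N u.+1 hi by rewrite inE; move: vr uv; clear; lia.
move: (B1_hull_sub_covered0 cHi XB1 vX vHi) => /subsetP/(_ u uhX).
by rewrite inE; clear; lia.
Qed.

End InnerCovered.

Section Istar.
Variable N : nat.
Implicit Types B : {set {set 'I_N.+1}}.

Lemma mem_istar B n : (n \in istar B) = [exists x in supp (B0 B), (x : nat) == n].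
Proof.
rewrite /istar mem_sort; apply/mapP/existsP.
  by case=> x; rewrite mem_enum => xs ->; exists x; rewrite xs eqxx.
by case=> x /andP[xs /eqP <-]; exists x; rewrite ?mem_enum.
Qed.

Lemma sorted_istar B : sorted ltn (istar B).
Proof.
rewrite ltn_sorted_uniq_leq sort_uniq sort_sorted ?andbT; last exact: leq_total.
by rewrite map_inj_uniq ?enum_uniq //; apply: val_inj.
Qed.

Lemma istar_eq B s : sorted ltn s ->
  (forall n, (n \in s) = [exists x in supp (B0 B), (x : nat) == n]) -> istar B = s.
Proof.
move=> sorted_s mem_s; apply: (irr_sorted_eq ltn_trans ltnn) (sorted_istar B) sorted_s _.
by move=> n; rewrite mem_istar mem_s.
Qed.

Lemma ist_supp B k : k < size (istar B) ->
  exists2 z : 'I_N.+1, z \in supp (B0 B) & (z : nat) = ist B k.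
Proof.
by move=> ks; move: (mem_nth 0 ks); rewrite mem_istar => /exists_inP[z zs /eqP]; exists z.
Qed.

Lemma ist_leq B i j : i <= j -> j < size (istar B) -> ist B i <= ist B j.
Proof.
move=> ij js; have : sorted leq (istar B).
  by move: (sorted_istar B); rewrite ltn_sorted_uniq_leq => /andP[].
move/(sorted_leq_nth leq_trans leqnn 0); apply; rewrite ?inE //.
exact: leq_ltn_trans ij js.
Qed.

Definition B0_nested B :=
  B0 B == [set X | [exists k : 'I_(sB B), X == pairset N (ist B k) (ist B (2 * sB B - 1 - k))]].

Definition gaps_covered B :=
  [forall k : 'I_(2 * sB B), ((k.+1 < 2 * sB B) && (k.+1 != sB B)) ==>
                             covered0 B (itv N (ist B k).+1 (ist B k.+1).-1)].

Lemma starPE B : starP B =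
  [&& inP B, inner_covered B, size (istar B) == 2 * sB B, B0_nested B & gaps_covered B].
Proof. by []. Qed.

Lemma gaps_coveredP B :
  reflect (forall k, k.+1 < 2 * sB B -> k.+1 != sB B ->
                     covered0 B (itv N (ist B k).+1 (ist B k.+1).-1))
          (gaps_covered B).
Proof.
apply: (iffP forallP) => [gapsB k k1 k2|gapsB k].
  by have /implyP := gapsB (Ordinal (ltnW k1)); apply; rewrite k1 k2.
by apply/implyP=> /andP[]; apply: gapsB.
Qed.

Lemma starP_size B : starP B -> size (istar B) = 2 * sB B.
Proof. by case/and5P=> _ _ /eqP. Qed.

Lemma supp_B0_bounds B x : starP B -> x \in supp (B0 B) -> ifirst B <= x <= ilast B.
Proof.
move=> sP xs; have xB : val x \in istar B by rewrite mem_istar; apply/exists_inP; exists x.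
rewrite -(nth_index 0 xB) -/(ist B _); move: xB; rewrite -index_mem (starP_size sP) => xi.
by rewrite /ifirst /ilast !ist_leq ?(starP_size sP) //; lia.
Qed.

End Istar.

Section UB.
Variable N : nat.
Hypothesis oddN : odd N.
Variable B : {set {set 'I_N.+1}}.
Hypotheses (pB : XN2p B) (sB_gt0 : 0 < sB B).

Let sP : starP B. Proof. by case/andP: pB. Qed.
Let iB : inP B. Proof. by case/and5P: sP. Qed.
Let innerB : inner_covered B. Proof. by case/and5P: sP. Qed.
Let nN : ~~ Nin (supp B). Proof. by case/and3P: pB. Qed.
Let cases : caseI B || caseII B.
Proof. by case/and3P: pB => _ _ /orP[/eqP s0|/andP[]] //; move: sB_gt0; rewrite s0. Qed.

Lemma uB_spec : exists u : 'I_N.+1, u_cond B u /\ uB B = u.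
Proof.
have [u cu] : exists u, u_cond B u.
  rewrite /u_cond; case cI : (caseI B).
    case/andP: cI => /(covered1_split (leqnn 1))[u [ur c1 c2]] _.
    by exists u; rewrite ur c1 c2.
  move: cases; rewrite cI => /andP[_ /(covered1_split (ltn0Sn _))[u [ur c1 c2]]].
  by exists u; rewrite ur c1 c2.
by rewrite /uB; case: pickP => [v cv | /(_ u)]; [exists v | rewrite cu].
Qed.

Let ist_pt k : k < 2 * sB B ->
  exists2 z : 'I_N.+1, z \in supp (B0 B) & (z : nat) = ist B k.
Proof. by rewrite -(starP_size sP); apply: ist_supp. Qed.

Lemma ilast_ltN : ilast B < N.
Proof.
have [|z zs zl] := ist_pt (k := (2 * sB B).-1); first by rewrite ltn_predL muln_gt0.
rewrite /ilast -zl ltn_neqAle leq_ord andbT; apply: contraNneq nN => zN.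
by apply/exists_inP; exists z; [exact: supp_B0_supp zs | exact/eqP].
Qed.

Variable u : 'I_N.+1.
Hypothesis cu : u_cond B u.

Lemma u_cond_range : 1 <= u < N.
Proof.
move: cu; rewrite /u_cond; case: ifP => _ /and3P[ur _ _].
  have [|z _ zf] := ist_pt (k := 0); first by rewrite muln_gt0.
  by move: (leq_ord z) ur; rewrite zf /ifirst; clear; lia.
by move: oddN ur; clear; lia.
Qed.

Lemma u_cond_notin_supp : u \notin supp B.
Proof.
move: cu; rewrite /u_cond; case: ifP => _ /and3P[ur c1 c2].
  apply: (notin_supp_between iB innerB _ ur c1 c2) => //.
    by apply/negP=> /(supp_B0_bounds sP); move: ur; clear; lia.
  move=> P v PB1 uP vP; have [|z zs zf] := ist_pt (k := 0); first by rewrite muln_gt0.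
  have /andP[_ /subsetP/(_ v vP)] := inP_is2 iB (B1_sub PB1).
  move: (B1_not_across_B0 iB innerB zs PB1 uP vP) ur.
  by rewrite inE zf /ifirst; clear; lia.
apply: (notin_supp_between iB innerB _ ur c1 c2) => //.
  by apply/negP=> /(supp_B0_bounds sP); move: ur; clear; lia.
move=> P v PB1 uP vP.
have [|z zs zl] := ist_pt (k := (2 * sB B).-1); first by rewrite ltn_predL muln_gt0.
have vN : (v : nat) != N.
  apply: contraNneq nN => vN; apply/exists_inP; exists v; last exact/eqP.
  exact: mem_supp (B1_sub PB1) vP.
move: (B1_not_across_B0 iB innerB zs PB1 vP uP) (leq_ord v) vN ur.
by rewrite zl /ilast; clear; lia.
Qed.

Lemma odd_u_cond : odd u = caseI B.
Proof.
move: cu; rewrite /u_cond; case: ifP => _ /and3P[ur c1 c2].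
  move: (covered0_even iB c1); rewrite card_itv; last by move: (u_cond_range); clear; lia.
  by move: ur; clear; lia.
move: (covered0_even iB c2); rewrite card_itv; last by clear; lia.
by move: oddN ur; clear; lia.
Qed.

End UB.

Section AddPair.
Variable N : nat.
Implicit Types (P : {set 'I_N.+1}) (B : {set {set 'I_N.+1}}).

Lemma set_exists_ordS (T : finType) n (f : nat -> T) :
  [set x | [exists k : 'I_n.+1, x == f k]] = f 0 |: [set x | [exists k : 'I_n, x == f k.+1]].
Proof.
apply/setP=> x; rewrite !inE; apply/existsP/orP.
  by case=> -[[|k] kn] xk; [left | right; apply/existsP; exists (@Ordinal n k kn)].
case=> [x0|/existsP[k xk]]; first by exists ord0.
by exists (@Ordinal n.+1 k.+1 (ltn_ord k)).
Qed.

Lemma notin_disjoint_supp B P x : x \in P -> [disjoint P & supp B] -> P \notin B.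
Proof.
move=> xP dP; apply/negP=> PB; move/disjoint_setI0/setP/(_ x): dP.
by rewrite in_setI xP (mem_supp PB xP) in_set0.
Qed.

Lemma disjoint_pairset_supp B (u : 'I_N.+1) : ~~ Nin (supp B) -> u \notin supp B ->
  [disjoint pairset N u N & supp B].
Proof.
move=> nN un; rewrite pairsetE -setI_eq0; apply/eqP/setP=> x; rewrite !inE.
case: (x =P u) => [->|_]; first by rewrite (negPf un).
case: (x =P ord_max) => //= ->; apply: contraNF nN => Ns.
by apply/exists_inP; exists ord_max.
Qed.

Lemma interior_pairset (u : 'I_N.+1) : 1 <= u < N ->
  hull (pairset N u N) :\: pairset N u N = itv N u.+1 N.-1.
Proof.
move=> ur; apply/setP=> x; rewrite hull_pairset !inE /=.
by have := leq_ord x; case: (x =P u) => [->|/eqP]; rewrite -?val_eqE /=; lia.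
Qed.

Lemma brk_pairset (u : 'I_N.+1) : 1 <= u < N -> brk (pairset N u N) =
  if odd (u + N) then itv N u N else symd [set x : 'I_N.+1 | val x == N] (itv N 1 u).
Proof.
move=> ur; rewrite /brk odd_pair_pairset hull_pairset; case: ifP => // _.
apply/setP=> x; rewrite in_symd !inE /=.
by have := leq_ord x; case: (x =P u) => [->|/eqP]; rewrite -?val_eqE /=; lia.
Qed.

End AddPair.

Section AddOddPair.
Variables (N : nat) (B : {set {set 'I_N.+1}}) (P : {set 'I_N.+1}).
Hypothesis oP : odd_pair P.
Let B' := B :|: [set P].
Let sub : B \subset B' := subsetUl _ _.

Let istar_B' : istar B' = istar B. Proof. by rewrite /istar B0_setU1_odd. Qed.
Let sB_B' : sB B' = sB B. Proof. by rewrite /sB B0_setU1_odd. Qed.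

Lemma ifirst_setU1_odd : ifirst B' = ifirst B.
Proof. by rewrite /ifirst /ist istar_B'. Qed.

Lemma ilast_setU1_odd : ilast B' = ilast B.
Proof. by rewrite /ilast /ist istar_B' sB_B'. Qed.

Lemma starP_setU1_odd : starP B -> is2 P -> [disjoint P & supp B] ->
  covered0 B (hull P :\: P) -> starP B'.
Proof.
rewrite !starPE /B0_nested /gaps_covered /ist istar_B' sB_B' B0_setU1_odd //.
case/and5P=> iB innerB -> -> /forallP gaps P2 dP cP; rewrite inP_setU1 //=.
apply/andP; split.
  apply/forall_inP=> X; rewrite B1_setU1_odd // in_setU1 => /orP[/eqP->|XB1].
    exact: covered0S sub cP.
  exact: covered0S sub (forall_inP innerB X XB1).
by apply/forallP=> k; apply/implyP=> hk; apply: covered0S sub (implyP (gaps k) hk).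
Qed.

End AddOddPair.

Lemma XN1_setU1_odd N (B : {set {set 'I_N.+1}}) (u : 'I_N.+1) :
    starP B -> 1 <= u < N -> odd (u + N) -> [disjoint pairset N u N & supp B] ->
    ilast B < u -> covered0 B (itv N 1 (ifirst B).-1) ->
    covered0 B (itv N (ilast B).+1 u.-1) -> covered0 B (itv N u.+1 N.-1) ->
  XN1 (B :|: [set pairset N u N]).
Proof.
set P := pairset N u N; move=> sP ur oP dP lu cFirst cLast cInner.
rewrite -odd_pair_pairset -/P in oP; have sub : B \subset B :|: [set P] := subsetUl _ _.
rewrite /XN1 starP_setU1_odd ?is2_pairset ?interior_pairset //=.
rewrite /condI ifirst_setU1_odd // ilast_setU1_odd // (covered0S sub cFirst) orbC /=.
rewrite (@itv_splitU N _ _ u); [|by case/andP: ur|by move: ur lu; clear; lia].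
have cP : covered0 (B :|: [set P]) (itv N u N).
  by rewrite -hull_pairset covered0_hull // B1_setU1_odd // setU11.
by rewrite covered0U ?(covered0S sub cLast) ?disjoint_itv //; case/andP: ur.
Qed.

Section AddOuterPair.
Variables (N : nat) (B : {set {set 'I_N.+1}}) (u : 'I_N.+1).
Hypotheses (sP : starP B) (sB_gt0 : 0 < sB B) (u_gt0 : 0 < u) (u_ifirst : u < ifirst B)
  (ilastN : ilast B < N).
Let P := pairset N u N.
Hypotheses (evenP : ~~ odd_pair P) (dP : [disjoint P & supp B]).
Let B' := B :|: [set P].
Let sub : B \subset B' := subsetUl _ _.
Let size_istar : size (istar B) = 2 * sB B := starP_size sP.

Let istar_bounds n : n \in istar B -> u < n < N.
Proof.
rewrite mem_istar => /exists_inP[x /(supp_B0_bounds sP) xb /eqP <-].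
by move: u_ifirst ilastN xb; clear; lia.
Qed.

Let uN : u < N.
Proof.
have /istar_bounds /andP[uf fN] : ifirst B \in istar B.
  by rewrite mem_nth // size_istar muln_gt0.
exact: ltn_trans uf fN.
Qed.

Lemma istar_setU1_outer : istar B' = (u : nat) :: rcons (istar B) N.
Proof.
apply: istar_eq.
  rewrite /= rcons_path (path_sortedE ltn_trans) sorted_istar andbT; apply/andP; split.
    by apply/allP=> n /istar_bounds /andP[].
  by case/predU1P: (mem_last (u : nat) (istar B)) => [->|/istar_bounds /andP[]].
move=> n; rewrite /B' B0_setU1_even // supp_setU1 in_cons mem_rcons in_cons mem_istar.
apply/or3P/exists_inP.
  case=> [/eqP->|/eqP->|/exists_inP[x xs /eqP <-]]; first by exists u; rewrite ?inE ?eqxx.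
    by exists ord_max; rewrite ?inE ?eqxx ?orbT.
  by exists x; rewrite ?inE ?xs ?orbT.
case=> x /setUP[|xs /eqP <-]; last by apply: Or33; apply/exists_inP; exists x.
by rewrite !inE => /orP[]/eqP-> /eqP <-; [apply: Or31 | apply: Or32].
Qed.

Lemma sB_setU1_outer : sB B' = (sB B).+1.
Proof.
have PnB : P \notin B by apply: (notin_disjoint_supp (x := u)) dP; rewrite !inE eqxx.
by rewrite /sB B0_setU1_even // cardsU1 (contra (@B0_sub _ _ _) PnB).
Qed.

Let ist_B' k : ist B' k = nth 0 ((u : nat) :: rcons (istar B) N) k.
Proof. by rewrite /ist istar_setU1_outer. Qed.

Let ist_B'S k : k < 2 * sB B -> ist B' k.+1 = ist B k.
Proof. by move=> k_lt; rewrite ist_B' /= nth_rcons size_istar k_lt. Qed.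

Let ist_B'0 : ist B' 0 = u.
Proof. by rewrite ist_B'. Qed.

Let ist_B'last : ist B' (2 * sB B).+1 = N.
Proof. by rewrite ist_B' /= nth_rcons size_istar ltnn eqxx. Qed.

Lemma ifirst_setU1_outer : ifirst B' = u.
Proof. exact: ist_B'0. Qed.

Lemma ilast_setU1_outer : ilast B' = N.
Proof. by rewrite /ilast sB_setU1_outer mulnS add2n. Qed.

Lemma B0_nested_setU1_outer : B0_nested B'.
Proof.
move: sP; rewrite starPE => /and5P[_ _ _ /eqP nestedB _].
rewrite /B0_nested B0_setU1_even // sB_setU1_outer nestedB.
rewrite (set_exists_ordS _ (fun k => pairset N (ist B' k) (ist B' (2 * (sB B).+1 - 1 - k)))).
rewrite subn0 mulnS add2n subn1 /= ist_B'0 ist_B'last.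
apply/eqP; congr (_ |: _); apply/setP=> X; rewrite !inE; apply: eq_existsb => k.
have k_lt := ltn_ord k.
have -> : (2 * sB B).+2 - 1 - k.+1 = ((2 * sB B).-1 - k).+1 by move: k_lt; clear; lia.
by rewrite !ist_B'S //; move: k_lt; clear; lia.
Qed.

Lemma gaps_covered_setU1_outer :
    covered0 B (itv N u.+1 (ifirst B).-1) -> covered0 B (itv N (ilast B).+1 N.-1) ->
  gaps_covered B'.
Proof.
move=> cFirst cLast; move: sP; rewrite starPE => /and5P[_ _ _ _ /gaps_coveredP gapsB].
apply/gaps_coveredP; rewrite sB_setU1_outer => -[_ _|k k_lt k_mid].
  by rewrite ist_B'0 ist_B'S ?muln_gt0 //; exact: (covered0S sub cFirst).
have [k_lt'|k_last] := ltnP k.+1 (2 * sB B).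
  by rewrite ist_B'S ?(ltnW k_lt') // ist_B'S //; apply: (covered0S sub); apply: gapsB.
have -> : k = (2 * sB B).-1 by move: k_lt k_last; clear; lia.
rewrite ist_B'S ?ltn_predL ?muln_gt0 // prednK ?muln_gt0 // ist_B'last.
exact: (covered0S sub cLast).
Qed.

Lemma XN1_setU1_outer : covered0 B (itv N 1 u.-1) ->
    covered0 B (itv N u.+1 (ifirst B).-1) -> covered0 B (itv N (ilast B).+1 N.-1) ->
  XN1 B'.
Proof.
move=> cBelow cFirst cLast; move: sP; rewrite /XN1 !starPE => /and5P[iB innerB _ _ _].
have -> : inner_covered B'.
  apply/forall_inP=> X; rewrite /B' B1_setU1_even // => XB1.
  exact: covered0S sub (forall_inP innerB X XB1).
rewrite inP_setU1 ?is2_pairset ?u_gt0 // B0_nested_setU1_outer gaps_covered_setU1_outer //=.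
rewrite istar_setU1_outer /= size_rcons size_istar sB_setU1_outer mulnS add2n eqxx /=.
rewrite /condI ifirst_setU1_outer ilast_setU1_outer (covered0S sub cBelow).
by rewrite covered0_itv0 ?orbT.
Qed.

End AddOuterPair.

Lemma XN2p_XN2mF N (B : {set {set 'I_N.+1}}) : XN2p B -> XN2m B = false.
Proof.
case/and3P=> _ nN _; apply/negbTE/negP=> /and3P[_ _ /exists_inP[X XB /andP[NX _]]].
case/exists_inP: NX => x xX xN; apply: (negP nN).
by apply/exists_inP; exists x; [exact: mem_supp XB xX | exact: xN].
Qed.

Lemma eps_phi N (B : {set {set 'I_N.+1}}) : odd N -> XN2 B -> eps (phi B) = eps' B.
Proof.
move=> oddN XB; rewrite /phi /eps'.
have [/andP[pB s0]|not_pos] := boolP (XN2p B && (0 < sB B)); last first.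
  suff -> : XN2m B || (sB B == 0) by [].
  by case/orP: XB not_pos => [-> /=|->] //; rewrite eqn0Ngt orbC => ->.
rewrite XN2p_XN2mF // eqn0Ngt s0 /=.
have [u [cu ->]] := uB_spec pB s0.
have nN : ~~ Nin (supp B) by case/and3P: pB.
have dP := disjoint_pairset_supp nN (u_cond_notin_supp pB s0 cu).
rewrite eps_setU1; last by apply: (notin_disjoint_supp (x := u)) dP; rewrite !inE eqxx.
by rewrite brk_pairset ?(u_cond_range oddN pB s0 cu) // oddD oddN addbT; case: (odd u).
Qed.

Lemma XN1_phi N (B : {set {set 'I_N.+1}}) : odd N -> XN2 B -> XN1 (phi B).
Proof.
move=> oddN XB; rewrite /phi.
have [/andP[pB s0]|not_pos] := boolP (XN2p B && (0 < sB B)); last first.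
  case/orP: XB not_pos => [pB|/and3P[sP cI _] _]; last by rewrite /XN1 sP cI.
  by rewrite pB -eqn0Ngt /XN1 /condI => ->; case/andP: pB => ->.
have [u [cu ->]] := uB_spec pB s0.
have [sP nN cases] : [/\ starP B, ~~ Nin (supp B) & caseI B || caseII B].
  by case/and3P: pB => -> -> /=; rewrite eqn0Ngt s0 => /andP[].
have /andP[u_gt0 uN] := u_cond_range oddN pB s0 cu.
have dP := disjoint_pairset_supp nN (u_cond_notin_supp pB s0 cu).
have oddu := odd_u_cond oddN pB s0 cu.
move: cu; rewrite /u_cond; case: ifP => cI /and3P[ur cLo cHi]; rewrite cI in oddu.
  apply: XN1_setU1_outer; rewrite ?odd_pair_pairset ?oddD ?oddu ?oddN //.
  - by move: ur; clear; lia.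
  - exact: ilast_ltN pB s0.
  - by case/andP: cI.
move: cases; rewrite cI => /andP[cFirst _].
by apply: XN1_setU1_odd; rewrite ?oddD ?oddu ?oddN //; move: ur; clear; lia.
Qed.

Lemma inspanS N (X : {set 'I_N.+1}) (B B' : {set {set 'I_N.+1}}) :
  B \subset B' -> inspan X B -> inspan X B'.
Proof.
move=> sB /existsP[D /andP[sD eX]]; apply/existsP; exists D.
by rewrite (subset_trans sD sB) eX.
Qed.

Lemma sub_phi N (B : {set {set 'I_N.+1}}) : B \subset phi B.
Proof. by rewrite /phi; case: ifP => _ //; apply: subsetUl. Qed.

Lemma path_phi N (B : {set {set 'I_N.+1}}) (p : seq {set {set 'I_N.+1}}) :
    odd N -> all (@XN2 N) (B :: p) -> path (fun X Y => inspan (eps' X) Y) B p ->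
  path (fun X Y => inspan (eps X) Y) (phi B) (map (@phi N) p).
Proof.
move=> oddN; elim: p B => //= B' p IHp B /and3P[XB XB' Xp] /andP[spanB pathp].
rewrite eps_phi // (inspanS (sub_phi B') spanB) /=.
by apply: IHp; rewrite //= XB' Xp.
Qed.

Theorem mainTheorem3 (N : nat) (HNodd : odd N) (HN3 : 3 <= N)
    (B' B : {set {set 'I_N.+1}}) :
  XN2 B' -> XN2 B -> preceq B' B -> leX (phi B') (phi B).
Proof.
move=> _ _ [p /and3P[allX pathp /eqP lastp]].
exists (map (@phi N) p); apply/and3P; split.
- by rewrite -map_cons all_map; apply/allP=> X /(allP allX) /= /(XN1_phi HNodd).
- exact: path_phi.
- by rewrite last_map lastp.
Qed.
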